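(* Let $G$ be a strong $(\ell,d)$-graph. Then for any two strong $(\ell,d)$-partitions $\pi$ and $\pi'$ of $G$, the graphs $\phi(G,\pi)$ and $\phi(G,\pi')$ are identical.
   Context: For $U,W\subseteq V(G)$, $\Delta(U,W)=\max\{|N(u)\cap W|,|N(x)\cap U|:u\in U,x\in W\}$, and $\overline\Delta(U,W)$ likewise with $\overline N(v)=V(G)\setminus(N(v)\cup\{v\})$. A partition $\pi=\{V_1,\dots,V_{\ell'}\}$ of $V(G)$ is an $(\ell,d)$-partition if $\ell'\le\ell$ and every pair $(V_i,V_j)$ (not necessarily distinct) is $d$-sparse ($\Delta(V_i,V_j)\le d$) or $d$-dense ($\overline\Delta(V_i,V_j)\le d$); strong if each bag has at least $5\cdot2^\ell d$ vertices. The density graph $H(G,\pi)$ has vertex set $\{1,\dots,\ell'\}$, with edge $ij$ (a loop if $i=j$) iff $(V_i,V_j)$ is $d$-dense. For a graph $H'$ with loops on $\{1,\dots,\ell'\}$, $\psi(G,\pi,H')$ is obtained from $G$ by replacing, for each edge $ij$ of $H'$ with $i\ne j$, the bipartite graph between $V_i$ and $V_j$ by its bipartite complement, and, for each loop at $i$, $G[V_i]$ by its complement. Finally $\phi(G,\pi)=\psi(G,\pi,H(G,\pi))$. *)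

From mathcomp Require Import all_boot.
Set Implicit Arguments. Unset Strict Implicit. Unset Printing Implicit Defensive.

Definition simple_graph (T : finType) (G : rel T) : Prop :=
  symmetric G /\ irreflexive G.

Section Defs.
Variables (T : finType) (G : rel T).

Definition nbhd (v : T) : {set T} := [set u | G v u].
Definition conbhd (v : T) : {set T} := ~: (nbhd v :|: [set v]).

Definition sparse_pair (d : nat) (U W : {set T}) : bool :=
  [forall u in U, #|nbhd u :&: W| <= d] && [forall x in W, #|nbhd x :&: U| <= d].

Definition dense_pair (d : nat) (U W : {set T}) : bool :=
  [forall u in U, #|conbhd u :&: W| <= d] && [forall x in W, #|conbhd x :&: U| <= d].

Definition ld_partition (l d : nat) (P : {set {set T}}) : Prop :=
  partition P [set: T] /\ #|P| <= l /\
  forall Vi Vj, Vi \in P -> Vj \in P -> sparse_pair d Vi Vj || dense_pair d Vi Vj.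

Definition strong_ld_partition (l d : nat) (P : {set {set T}}) : Prop :=
  ld_partition l d P /\ forall Vi, Vi \in P -> 5 * 2 ^ l * d <= #|Vi|.

Definition strong_ld_graph (l d : nat) : Prop :=
  exists P, strong_ld_partition l d P.

(* phi(G,pi): for x in V_i, y in V_j, adjacency of x,y is flipped exactly when
   ij is an edge/loop of the density graph H(G,pi), i.e. (V_i,V_j) is d-dense
   (bipartite complement between V_i,V_j for i<>j; complement of G[V_i] for a
   loop at i). *)
Definition phi (d : nat) (P : {set {set T}}) : rel T :=
  fun x y => if x == y then false
             else G x y (+) dense_pair d (pblock P x) (pblock P y).

End Defs.

From mathcomp Require Import all_boot.
From mathcomp Require Import zify.

Set Implicit Arguments.
Unset Strict Implicit.
Unset Printing Implicit Defensive.

(* A vertex v has at most d neighbours in a bag W' sparse to its own bag and at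
   most d non-neighbours in a bag W dense to its other bag, so W and W' share at
   most 2d+1 vertices.  Hence two bags of different partitions that meet in at
   least 2d+2 vertices see the same density type from any common vertex.  For
   d > 0, pigeonhole shows that every bag of a strong partition meets some bag of
   any other (l,d)-partition in 2d+2 vertices, which chains the density types of
   the bags of x and y in the two partitions.  For d = 0 the density type of the
   bags of x and y is simply the adjacency of x and y. *)

Section DensePairs.
Variables (T : finType) (G : rel T).

Lemma dense_pairC d (U W : {set T}) : dense_pair G d U W = dense_pair G d W U.
Proof. by rewrite /dense_pair andbC. Qed.

Lemma dense_pair0 (U W : {set T}) x y :
  x \in U -> y \in W -> x != y ->
  sparse_pair G 0 U W || dense_pair G 0 U W -> dense_pair G 0 U W = G x y.
Proof.
move=> xU yW nxy; case Gxy: (G x y).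
  case/orP=> // /andP [/forall_inP sparse_x _].
  have := sparse_x x xU; rewrite leqn0 cards_eq0 => /eqP/setP/(_ y).
  by rewrite !inE Gxy yW.
move=> _; apply/negbTE/negP=> /andP [/forall_inP dense_x _].
have := dense_x x xU; rewrite leqn0 cards_eq0 => /eqP/setP/(_ y).
by rewrite !inE yW negb_or Gxy eq_sym nxy.
Qed.

Lemma card_dense_sparse_overlap d (U U' W W' : {set T}) v :
  v \in U -> v \in U' -> dense_pair G d U W -> sparse_pair G d U' W' ->
  #|W :&: W'| <= 2 * d + 1.
Proof.
move=> vU vU' /andP [/forall_inP dense_v _] /andP [/forall_inP sparse_v _].
have sub : W :&: W' \subset (nbhd G v :&: W') :|: (conbhd G v :&: W) :|: [set v].
  apply/subsetP=> z; rewrite !inE => /andP [-> ->]; rewrite !andbT.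
  by case: (G v z); case: (z == v).
have [card_U1 _] := leq_card_setU ((nbhd G v :&: W') :|: (conbhd G v :&: W)) [set v].
have [card_U2 _] := leq_card_setU (nbhd G v :&: W') (conbhd G v :&: W).
have := subset_leq_card sub; have := dense_v v vU; have := sparse_v v vU'.
rewrite cards1 in card_U1; lia.
Qed.

Lemma dense_pair_overlap d (U U' W W' : {set T}) v :
  v \in U -> v \in U' -> 2 * d + 2 <= #|W :&: W'| ->
  sparse_pair G d U W || dense_pair G d U W ->
  sparse_pair G d U' W' || dense_pair G d U' W' ->
  dense_pair G d U W = dense_pair G d U' W'.
Proof.
move=> vU vU' big_overlap sd sd'.
have no_mix (A A' B B' : {set T}) : v \in A -> v \in A' -> 2 * d + 2 <= #|B :&: B'| ->
    sparse_pair G d A' B' || dense_pair G d A' B' ->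
    dense_pair G d A B -> dense_pair G d A' B'.
  move=> vA vA' overlap /orP [sparse|//] dense.
  by have := card_dense_sparse_overlap vA vA' dense sparse; lia.
apply/idP/idP; first exact: no_mix vU vU' big_overlap sd'.
by apply: no_mix vU' vU _ sd; rewrite setIC.
Qed.

End DensePairs.

Section SetPartitions.
Variable T : finType.

Lemma mem_pblockT (P : {set {set T}}) x : partition P [set: T] -> x \in pblock P x.
Proof. by move=> partP; rewrite mem_pblock (cover_partition partP) inE. Qed.

Lemma pblockT_mem (P : {set {set T}}) x : partition P [set: T] -> pblock P x \in P.
Proof. by move=> partP; apply: pblock_mem; rewrite (cover_partition partP) inE. Qed.

Lemma card_bigcup_leq (I : finType) (A : {pred I}) (F : I -> {set T}) :
  #|\bigcup_(i in A) F i| <= \sum_(i in A) #|F i|.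
Proof.
apply: (big_ind2 (fun (X : {set T}) n => #|X| <= n)) => [|X1 n1 X2 n2 le1 le2|//].
  by rewrite cards0.
by have [le12 _] := leq_card_setU X1 X2; lia.
Qed.

Lemma partition_large_overlap (P : {set {set T}}) (W : {set T}) l k :
  partition P [set: T] -> #|P| <= l -> l * k < #|W| ->
  exists2 C, C \in P & k < #|W :&: C|.
Proof.
move=> partP cardP bigW.
apply/exists_inP; apply: contraLR bigW; rewrite negb_exists_in -leqNgt.
move=> /forall_inP small.
have sub : W \subset \bigcup_(C in P) (W :&: C).
  apply/subsetP=> z zW; have : z \in cover P by rewrite (cover_partition partP) inE.
  by case/bigcupP=> C CP zC; apply/bigcupP; exists C; rewrite // inE zW.
have sum_small : \sum_(C in P) #|W :&: C| <= #|P| * k.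
  by rewrite -sum_nat_const; apply: leq_sum => C CP; rewrite leqNgt small.
apply: leq_trans (subset_leq_card sub) _.
apply: leq_trans (card_bigcup_leq _ _) _.
by apply: leq_trans sum_small _; rewrite leq_mul2r cardP orbT.
Qed.

End SetPartitions.

Section LDPartitions.
Variables (T : finType) (G : rel T) (l d : nat).

Lemma ld_partition0_dense_pblock (P : {set {set T}}) x y :
  ld_partition G l 0 P -> x != y ->
  dense_pair G 0 (pblock P x) (pblock P y) = G x y.
Proof.
move=> [partP [_ sd]] nxy; apply: dense_pair0 nxy _.
- exact: mem_pblockT.
- exact: mem_pblockT.
by apply: sd; apply: pblockT_mem.
Qed.

Lemma strong_bag_overlap (P P' : {set {set T}}) W :
  0 < d -> strong_ld_partition G l d P -> ld_partition G l d P' -> W \in P ->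
  exists2 C, C \in P' & 2 * d + 2 <= #|W :&: C|.
Proof.
move=> d_gt0 [_ strongP] [partP' [cardP' _]] WP.
have big_bag : l * (2 * d + 1) < #|W|.
  have := strongP W WP; have := ltn_expl l (ltnSn 1); set e := 2 ^ l.
  by nia.
have [C CP' overlap] := partition_large_overlap partP' cardP' big_bag.
by exists C; rewrite // addnS.
Qed.

Lemma strong_ld_partition_dense_pblock (P P' : {set {set T}}) x y :
  0 < d -> strong_ld_partition G l d P -> strong_ld_partition G l d P' ->
  dense_pair G d (pblock P x) (pblock P y) =
  dense_pair G d (pblock P' x) (pblock P' y).
Proof.
move=> d_gt0 strongP strongP'.
have [[partP [_ sdP]] _] := strongP; have [[partP' [_ sdP']] _] := strongP'.
set A := pblock P x; set B := pblock P y.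
set A' := pblock P' x; set B' := pblock P' y.
have AP : A \in P by apply: pblockT_mem. have BP : B \in P by apply: pblockT_mem.
have AP' : A' \in P' by apply: pblockT_mem. have BP' : B' \in P' by apply: pblockT_mem.
have [C CP' BC] := strong_bag_overlap d_gt0 strongP strongP'.1 BP.
have [W WP A'W] := strong_bag_overlap d_gt0 strongP' strongP.1 AP'.
have [v /setIP [vA' vW]] : exists v, v \in A' :&: W.
  by apply/set0Pn; rewrite -card_gt0; lia.
rewrite setIC in A'W.
have xA : x \in A by apply: mem_pblockT.
have xA' : x \in A' by apply: mem_pblockT.
have yB : y \in B by apply: mem_pblockT.
have yB' : y \in B' by apply: mem_pblockT.
rewrite (dense_pair_overlap xA xA' BC (sdP _ _ AP BP) (sdP' _ _ AP' CP')).
rewrite -(dense_pair_overlap vW vA' BC (sdP _ _ WP BP) (sdP' _ _ AP' CP')).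
rewrite dense_pairC (dense_pair_overlap yB yB' A'W (sdP _ _ BP WP) (sdP' _ _ BP' AP')).
exact: dense_pairC.
Qed.

End LDPartitions.

Theorem proposition2p7 (T : finType) (G : rel T) (l d : nat) :
  simple_graph G ->
  strong_ld_graph G l d ->
  forall P P' : {set {set T}},
    strong_ld_partition G l d P ->
    strong_ld_partition G l d P' ->
    forall x y : T, phi G d P x y = phi G d P' x y.
Proof.
move=> _ _ P P' strongP strongP' x y.
rewrite /phi; case: eqP => // /eqP nxy; congr (_ (+) _).
have [d0 | d_gt0] := posnP d; last exact: strong_ld_partition_dense_pblock d_gt0 strongP strongP'.
subst d; rewrite (ld_partition0_dense_pblock strongP.1 nxy).
by rewrite (ld_partition0_dense_pblock strongP'.1 nxy).
Qed.
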